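(* Let $G$ be a finite abelian $p$-group ($p$ any prime). Then the lattice $\mathrm{Char}(G)$ of characteristic subgroups of $G$ is directly indecomposable, i.e. it is not isomorphic to a direct product of two nontrivial lattices.
   Context: A lattice is nontrivial if it has more than one element. *)

From HB Require Import structures.
From mathcomp Require Import all_boot all_order all_fingroup all_solvable.
Set Implicit Arguments. Unset Strict Implicit. Unset Printing Implicit Defensive.
Import Order.TTheory.
Local Open Scope group_scope.

(* Char(G) is directly decomposable iff there are nontrivial lattices L1, L2
   and a bijection Char(G) -> L1 * L2 (given componentwise by f1, f2) that is a
   lattice homomorphism into the product lattice (meet/join componentwise). *)
Definition char_lattice_decomposable (gT : finGroupType) (G : {group gT}) : Prop :=
  exists (d1 d2 : Order.disp_t) (L1 : latticeType d1) (L2 : latticeType d2)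
         (f1 : {group gT} -> L1) (f2 : {group gT} -> L2),
    [/\ (exists x y : L1, x != y),
        (exists x y : L2, x != y),
        (forall H K : {group gT}, H \char G -> K \char G ->
            f1 H = f1 K -> f2 H = f2 K -> H = K),
        (forall (a : L1) (b : L2), exists H : {group gT},
            [/\ H \char G, f1 H = a & f2 H = b]) &
        (forall H K : {group gT}, H \char G -> K \char G ->
           [/\ f1 (H :&: K)%G = Order.meet (f1 H) (f1 K),
               f2 (H :&: K)%G = Order.meet (f2 H) (f2 K),
               f1 (H <*> K)%G = Order.join (f1 H) (f1 K) &
               f2 (H <*> K)%G = Order.join (f2 H) (f2 K)])].

From HB Require Import structures.
From mathcomp Require Import all_boot all_order all_fingroup all_solvable.
Set Implicit Arguments. Unset Strict Implicit. Unset Printing Implicit Defensive.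
Local Open Scope group_scope.

(* A decomposition Char(G) = L1 x L2 with both factors nontrivial yields
   characteristic subgroups E, F, the preimages of (top, bottom) and
   (bottom, top), with E :&: F = 1 and E <*> F = G, so G = E \x F. Exponents
   of p-groups are p-powers, so one factor, say E, has the exponent of G.
   Then G = <[e]> \x K with #[e] = exponent G and F inside K, and for
   1 != y \in F the automorphism e |-> e * y fixing K must preserve E, which
   forces y \in E :&: F = 1. *)

Lemma pgroup_dprod_exponent (p : nat) (gT : finGroupType) (G E F : {group gT}) :
  p.-group G -> E \x F = G -> exponent E = exponent G \/ exponent F = exponent G.
Proof.
move=> pG dG; rewrite -(dprod_exponent dG).
have [sEG sFG] : E \subset G /\ F \subset G.
  by rewrite -(dprodWY dG) joing_subl joing_subr.
have pexp (H : {group gT}) : H \subset G -> p.-nat (exponent H).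
  by move=> sHG; apply: pnat_dvd (exponentS sHG) _; rewrite pnat_exponent.
have [[a ->] [b ->]] := (p_natP (pexp E sEG), p_natP (pexp F sFG)).
have [le_ba | le_ab] := leqP b a.
  by left; apply/esym/lcmn_idPl; rewrite dvdn_exp2l.
by right; apply/esym/lcmn_idPr; rewrite dvdn_exp2l // ltnW.
Qed.

Section AbelianDirectFactors.

Variables (gT : finGroupType) (G : {group gT}).
Hypothesis cGG : abelian G.

Lemma abelian_dprod_cycle_complement (E F : {group gT}) (e : gT) :
  E \x F = G -> e \in E -> #[e] = exponent E ->
  exists2 K : {group gT}, <[e]> \x K = G & F \subset K.
Proof.
move=> dG Ee oe; have [_ _ _ tiEF] := dprodP dG.
have [sEG sFG] : E \subset G /\ F \subset G.
  by rewrite -(dprodWY dG) joing_subl joing_subr.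
have cEE := abelianS sEG cGG.
have /splitsP[K0 /complP[tiK0 defE]] := abelian_splits Ee oe cEE.
have sK0E : K0 \subset E by rewrite -defE mulG_subr.
have dE : <[e]> \x K0 = E.
  by rewrite dprodE // (sub_abelian_cent2 cEE) // cycle_subG.
have dK : K0 \x F = K0 <*> F.
  rewrite dprodEY // ?(sub_abelian_cent2 cGG) ?(subset_trans sK0E) //.
  by apply/trivgP; rewrite -tiEF setSI.
exists (K0 <*> F)%G; last exact: joing_subr.
by rewrite /= -dK dprodA dE.
Qed.

Lemma char_cycle_dprod_shift (K H : {group gT}) (e y : gT) :
  <[e]> \x K = G -> y \in K -> #[y] %| #[e] -> H \char G -> e \in H -> y \in H.
Proof.
move=> dG Ky oy chH He.
have sKG : K \subset G by rewrite -(dprodWY dG) joing_subr.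
have Ge : e \in G by rewrite -(dprodWY dG) mem_gen // inE cycle_id.
have Gey : e * y \in G by rewrite groupM // (subsetP sKG).
have dvd_ey : #[e * y] %| #[e].
  rewrite order_dvdn expgMn; last exact: (centsP cGG) (subsetP sKG y Ky).
  by rewrite expg_order mul1g -order_dvdn.
have em : eltm_morphism dvd_ey e = e * y by exact: eltm_id.
have cfK : idm K @* K \subset 'C(eltm dvd_ey @* <[e]>).
  rewrite im_idm morphim_cycle ?cycle_id // em.
  by apply: (sub_abelian_cent2 cGG); rewrite ?cycle_subG.
set f := dprodm dG cfK.
have fe : f e = e * y by rewrite /f dprodmEl ?cycle_id.
have fy : f y = y by rewrite /f dprodmEr.
have fG : f @* G = G.
  apply/eqP; rewrite eqEsubset; apply/andP; split.
    rewrite /f im_dprodm im_idm morphim_cycle ?cycle_id // em.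
    by rewrite mul_subG ?cycle_subG.
  have Gy : y \in G := subsetP sKG y Ky.
  suff : <[e]> * K \subset f @* G by rewrite (dprodW dG).
  apply: mul_subG.
    have fGe : f e * (f y)^-1 \in f @* G by rewrite groupM ?groupV ?mem_morphim.
    by rewrite fe fy mulgK cycle_subG in fGe *.
  by rewrite /f /= im_dprodm im_idm mulG_subr.
have injf : 'injm f by rewrite -card_im_injm fG.
have [_ /(_ f injf fG) fH] := charP _ _ chH.
have : f e \in f @* H by rewrite mem_morphim // (subsetP (char_sub chH)).
by rewrite fH fe groupMl.
Qed.

Lemma exponent_char_dprod_trivial (E F : {group gT}) :
  E \char G -> E \x F = G -> exponent E = exponent G -> F :=: 1.
Proof.
move=> chE dG expE; have [_ _ _ tiEF] := dprodP dG.
have sFG : F \subset G by rewrite -(dprodWY dG) joing_subr.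
have cEE := abelianS (char_sub chE) cGG.
have [e Ee oe] := exponent_witness (abelian_nil cEE).
have [K dK sFK] := abelian_dprod_cycle_complement dG Ee (esym oe).
apply/trivgP/subsetP=> y Fy; rewrite -tiEF inE Fy andbT.
apply: (char_cycle_dprod_shift dK (subsetP sFK y Fy) _ chE Ee).
by rewrite -oe expE dvdn_exponent ?(subsetP sFG).
Qed.

Lemma abelian_pgroup_char_dprod_trivial (p : nat) (E F : {group gT}) :
  p.-group G -> E \char G -> F \char G -> E \x F = G -> E :=: 1 \/ F :=: 1.
Proof.
move=> pG chE chF dG.
have [expE | expF] := pgroup_dprod_exponent pG dG.
  by right; apply: exponent_char_dprod_trivial chE dG expE.
by left; apply: exponent_char_dprod_trivial chF _ expF; rewrite dprodC.
Qed.

End AbelianDirectFactors.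

Section CharLatticeDecomposition.

Variables (gT : finGroupType) (G : {group gT}).

Lemma char_meet_surj_top_neq_bot (d : Order.disp_t) (L : latticeType d)
    (f : {group gT} -> L) :
  (forall a : L, exists2 H : {group gT}, H \char G & f H = a) ->
  (forall H K : {group gT}, H \char G -> K \char G ->
     f (H :&: K)%G = Order.meet (f H) (f K)) ->
  (exists x y : L, x != y) -> f G != f 1%G.
Proof.
move=> fsurj fI [x [y]]; apply: contraNneq => fG1.
have all1 a : a = f 1%G.
  have [H chH <-] := fsurj a.
  have -> : H = (H :&: G)%G by apply/val_inj; rewrite /= (setIidPl (char_sub chH)).
  rewrite fI ?char_refl // fG1 -fI ?char1 //.
  by congr f; apply/val_inj; rewrite /= setIg1.
by rewrite (all1 x) (all1 y).
Qed.

Lemma char_lattice_decomposable_complements :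
  char_lattice_decomposable G ->
  exists E F : {group gT}, [/\ E \char G, F \char G, E :&: F = 1, E <*> F = G &
                              (E :!=: 1) && (F :!=: 1)].
Proof.
case=> d1 [d2 [L1 [L2 [f1 [f2 [nt1 nt2 inj surj hom]]]]]].
have ch1 := char1 G; have chG := char_refl G.
have f1G : f1 G != f1 1%G.
  apply: char_meet_surj_top_neq_bot nt1 => [a | H K chH chK].
    by have [H [chH <- _]] := surj a (f2 1%G); exists H.
  by case: (hom H K chH chK).
have f2G : f2 G != f2 1%G.
  apply: char_meet_surj_top_neq_bot nt2 => [b | H K chH chK].
    by have [H [chH _ <-]] := surj (f1 1%G) b; exists H.
  by case: (hom H K chH chK).
have [E [chE fE1 fE2]] := surj (f1 G) (f2 1%G).
have [F [chF fF1 fF2]] := surj (f1 1%G) (f2 G).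
have [fEF1 fEF2 fEF3 fEF4] := hom E F chE chF.
have [fG11 _ fG13 _] := hom G 1%G chG ch1.
have [_ f1G2 _ f1G4] := hom 1%G G ch1 chG.
have eGI1 : (G :&: 1)%G = 1%G by apply/val_inj; rewrite /= setIg1.
have e1IG : (1 :&: G)%G = 1%G by apply/val_inj; rewrite /= setI1g.
have eGY1 : (G <*> 1)%G = G by apply/val_inj; rewrite /= joingG1.
have e1YG : (1 <*> G)%G = G by apply/val_inj; rewrite /= joing1G.
exists E, F; split=> //.
- have := inj _ _ (charI chE chF) ch1.
  rewrite fEF1 fEF2 fE1 fE2 fF1 fF2 -fG11 -f1G2 eGI1 e1IG.
  by move=> /(_ erefl erefl)/(congr1 val).
- have := inj _ _ (charY chE chF) chG.
  rewrite fEF3 fEF4 fE1 fE2 fF1 fF2 -fG13 -f1G4 eGY1 e1YG.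
  by move=> /(_ erefl erefl)/(congr1 val).
apply/andP; split.
  by apply: contraNneq f1G => E1; rewrite -fE1 (_ : E = 1%G) //; apply/val_inj.
by apply: contraNneq f2G => F1; rewrite -fF2 (_ : F = 1%G) //; apply/val_inj.
Qed.

End CharLatticeDecomposition.

Theorem mainTheorem14 (p : nat) (gT : finGroupType) (G : {group gT}) :
  prime p -> p.-group G -> abelian G -> ~ char_lattice_decomposable G.
Proof.
move=> _ pG cGG /char_lattice_decomposable_complements.
case=> E [F [chE chF tiEF defG /andP[ntE ntF]]].
have dG : E \x F = G by rewrite dprodEY // (sub_abelian_cent2 cGG) ?char_sub.
have [E1 | F1] := abelian_pgroup_char_dprod_trivial cGG pG chE chF dG.
  by rewrite E1 eqxx in ntE.
by rewrite F1 eqxx in ntF.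
Qed.
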